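(* Let $T<\infty$ and $\Delta_T=\{(s,t):0\le t\le s\le T\}$. There exists at most one solution $(R,C,q,K,H)\in\mathcal C_b^1(\Delta_T)^2\times\mathcal C_b^1([0,T])^3$ (with $C$ extended to $[0,T]^2$ by $C(s,t)=C(t,s)$) of the equations, for $(s,t)\in\Delta_T$, \begin{align*} \partial_sR(s,t)&=-f'(K(s))R(s,t)+\int_t^sR(u,t)R(s,u)\nu''(C(s,u))du,\\ \partial_sC(s,t)&=-f'(K(s))C(s,t)+\int_0^sR(s,u)\Big[\nu''(C(s,u))C(u,t)-\frac{q(t)\nu'(q(u))\nu''(q(s))}{\nu'(q_\star^2)}\Big]du\\&\quad+\int_0^tR(t,u)\Big[\nu'(C(s,u))-\frac{\nu'(q(s))\nu'(q(u))}{\nu'(q_\star^2)}\Big]du+q(t){\mathsf v}_\star'(q(s)),\\ \partial_sq(s)&=-f'(K(s))q(s)+\int_0^sR(s,u)\Big[q(u)\nu''(C(s,u))-\frac{q_\star^2\nu'(q(u))\nu''(q(s))}{\nu'(q_\star^2)}\Big]du+q_\star^2{\mathsf v}_\star'(q(s)),\\ \partial_sK(s)&=1-2f'(K(s))K(s)+2\int_0^sR(s,u)\Big[\psi(C(s,u))-\frac{\psi(q(s))\nu'(q(u))}{\nu'(q_\star^2)}\Big]du+2q(s){\mathsf v}_\star'(q(s)),\\ H(s)&=\int_0^sR(s,u)\Big[\nu'(C(s,u))-\frac{\nu'(q(s))\nu'(q(u))}{\nu'(q_\star^2)}\Big]du+{\mathsf v}_\star(q(s)), \end{align*} with boundary conditions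 $R(s,s)=1$ and $C(s,s)=K(s)$ for all $s\in[0,T]$, and $K(0)=1$, $q(0)=q_o$ given.
   Context: $m\ge2$, $b_2,\dots,b_m$ real with $b_m\ne0$, $\nu(r)=\sum_{p=2}^mb_p^2r^p$, $\psi(r)=r\nu''(r)+\nu'(r)$; $q_\star>0$, $q_o$ a real number, $E_\star,G_\star$ reals (with $G_\star=mE_\star/q_\star^2$ if $\nu(r)=b_m^2r^m$, the pure case). In the mixed case (any other $\nu$) ${\mathsf v}_p=\begin{bmatrix}q_\star^2\nu(q_\star^2)&q_\star^2\nu'(q_\star^2)\\ q_\star^2\nu'(q_\star^2)&\psi(q_\star^2)\end{bmatrix}^{-1}\begin{bmatrix}q_\star^2\\ p\end{bmatrix}$ and ${\mathsf v}_\star(r)=\sum_{p=2}^mb_p^2\langle{\mathsf v}_p,(E_\star,G_\star)\rangle r^p$; in the pure case ${\mathsf v}_\star(r)=E_\star q_\star^{-2m}r^m$. $f:[0,\infty)\to\mathbb R$ is differentiable with $f'$ locally Lipschitz, $\inf_{r\ge0}\{f'(r)-Ar^{2k-1}\}>-\infty$ for some $A>0,k>m/4$, and $\sup_r|f'(r)|(1+r)^{-\kappa}<\infty$ for some $\kappa$. $\mathcal C_b^1$ denotes bounded continuously differentiable functions. *)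

From Stdlib Require Import Reals Lra ClassicalDescription.
From Coquelicot Require Import Coquelicot.
Open Scope R_scope.

Definition is_deriv_within (D : R -> Prop) (g : R -> R) (x l : R) : Prop :=
  filterlim (fun y => (g y - g x) / (y - x))
            (within (fun y => D y /\ y <> x) (locally x)) (locally l).

Definition cont_within (D : R -> Prop) (g : R -> R) (x : R) : Prop :=
  filterlim g (within D (locally x)) (locally (g x)).

Definition cont2_within (D : R * R -> Prop) (g : R -> R -> R) (s t : R) : Prop :=
  filterlim (fun p : R * R => g (fst p) (snd p))
            (within D (locally (s, t))) (locally (g s t)).

Definition I0T (T : R) (s : R) : Prop := 0 <= s <= T.
Definition DeltaT (T : R) (p : R * R) : Prop := 0 <= snd p <= fst p /\ fst p <= T.

Definition C1b_interval (T : R) (g : R -> R) : Prop :=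
  exists g' : R -> R,
    (forall s, I0T T s -> is_deriv_within (I0T T) g s (g' s)) /\
    (forall s, I0T T s -> cont_within (I0T T) g' s) /\
    (exists M, forall s, I0T T s -> Rabs (g s) <= M /\ Rabs (g' s) <= M).

Definition C1b_triangle (T : R) (g : R -> R -> R) : Prop :=
  exists gs gt : R -> R -> R,
    (forall s t, DeltaT T (s, t) ->
       is_deriv_within (fun s' => DeltaT T (s', t)) (fun s' => g s' t) s (gs s t)) /\
    (forall s t, DeltaT T (s, t) ->
       is_deriv_within (fun t' => DeltaT T (s, t')) (fun t' => g s t') t (gt s t)) /\
    (forall s t, DeltaT T (s, t) ->
       cont2_within (DeltaT T) g s t /\ cont2_within (DeltaT T) gs s t /\
       cont2_within (DeltaT T) gt s t) /\
    (exists M, forall s t, DeltaT T (s, t) ->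
       Rabs (g s t) <= M /\ Rabs (gs s t) <= M /\ Rabs (gt s t) <= M).

Definition Csym (C : R -> R -> R) (s t : R) : R :=
  if Rle_dec t s then C s t else C t s.

Definition nu (m : nat) (b : nat -> R) (r : R) : R :=
  sum_n_m (fun p => b p ^ 2 * r ^ p) 2 m.
Definition nu1 (m : nat) (b : nat -> R) (r : R) : R :=
  sum_n_m (fun p => INR p * b p ^ 2 * r ^ (p - 1)) 2 m.
Definition nu2 (m : nat) (b : nat -> R) (r : R) : R :=
  sum_n_m (fun p => INR p * INR (p - 1) * b p ^ 2 * r ^ (p - 2)) 2 m.
Definition psi (m : nat) (b : nat -> R) (r : R) : R :=
  r * nu2 m b r + nu1 m b r.

Definition is_pure (m : nat) (b : nat -> R) : Prop :=
  forall r, nu m b r = b m ^ 2 * r ^ m.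

(** Mixed case: <v_p, (E,G)> where
    v_p = [[x nu(x), x nu'(x)], [x nu'(x), psi(x)]]^{-1} [x; p], x = q_star^2
    (explicit 2x2 inverse). *)
Definition vcoef (m : nat) (b : nat -> R) (qs E G : R) (p : nat) : R :=
  let x := qs ^ 2 in
  let a := x * nu m b x in
  let bb := x * nu1 m b x in
  let c := psi m b x in
  let det := a * c - bb * bb in
  / det * ((c * x - bb * INR p) * E + (a * INR p - bb * x) * G).

Definition vstar (m : nat) (b : nat -> R) (qs E G : R) (r : R) : R :=
  if excluded_middle_informative (is_pure m b)
  then E * / qs ^ (2 * m) * r ^ m
  else sum_n_m (fun p => b p ^ 2 * vcoef m b qs E G p * r ^ p) 2 m.

Definition vstar1 (m : nat) (b : nat -> R) (qs E G : R) (r : R) : R :=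
  if excluded_middle_informative (is_pure m b)
  then E * / qs ^ (2 * m) * INR m * r ^ (m - 1)
  else sum_n_m (fun p => INR p * b p ^ 2 * vcoef m b qs E G p * r ^ (p - 1)) 2 m.

(** r^e for r >= 0 and real e > 0 (0^e = 0). *)
Definition rpow (r e : R) : R := if Rlt_dec 0 r then Rpower r e else 0.

Definition f_assumptions (m : nat) (f fp : R -> R) : Prop :=
  (forall r, 0 <= r -> is_deriv_within (fun x => 0 <= x) f r (fp r)) /\
  (forall x, 0 <= x -> exists delta L, 0 < delta /\
     forall y z, 0 <= y -> 0 <= z -> Rabs (y - x) < delta -> Rabs (z - x) < delta ->
       Rabs (fp y - fp z) <= L * Rabs (y - z)) /\
  (exists A k, 0 < A /\ INR m / 4 < k /\
     exists L, forall r, 0 <= r -> L <= fp r - A * rpow r (2 * k - 1)) /\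
  (exists kappa M, forall r, 0 <= r -> Rabs (fp r) * Rpower (1 + r) (- kappa) <= M).

(** (R,C,q,K,H) in C_b^1(Delta_T)^2 x C_b^1([0,T])^3 solves the system
    (K(s) >= 0 is required so that f'(K(s)) is meaningful, f being defined
    on [0,oo)). *)
Definition is_solution (m : nat) (b : nat -> R) (qs qo E G : R) (fp : R -> R) (T : R)
  (Rf C : R -> R -> R) (q K H : R -> R) : Prop :=
  let n1 := nu1 m b in
  let n2 := nu2 m b in
  let ps := psi m b in
  let x := qs ^ 2 in
  let vs := vstar m b qs E G in
  let vs1 := vstar1 m b qs E G in
  let Cs := Csym C in
  C1b_triangle T Rf /\ C1b_triangle T C /\
  C1b_interval T q /\ C1b_interval T K /\ C1b_interval T H /\
  (forall s, I0T T s -> 0 <= K s) /\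
  (forall s t, DeltaT T (s, t) ->
     is_deriv_within (fun s' => DeltaT T (s', t)) (fun s' => Rf s' t) s
       (- fp (K s) * Rf s t
        + RInt (fun u => Rf u t * Rf s u * n2 (Cs s u)) t s)) /\
  (forall s t, DeltaT T (s, t) ->
     is_deriv_within (fun s' => DeltaT T (s', t)) (fun s' => C s' t) s
       (- fp (K s) * C s t
        + RInt (fun u => Rf s u * (n2 (Cs s u) * Cs u t
                                   - q t * n1 (q u) * n2 (q s) / n1 x)) 0 s
        + RInt (fun u => Rf t u * (n1 (Cs s u) - n1 (q s) * n1 (q u) / n1 x)) 0 t
        + q t * vs1 (q s))) /\
  (forall s, I0T T s ->
     is_deriv_within (I0T T) q s
       (- fp (K s) * q s
        + RInt (fun u => Rf s u * (q u * n2 (Cs s u)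
                                   - x * n1 (q u) * n2 (q s) / n1 x)) 0 s
        + x * vs1 (q s))) /\
  (forall s, I0T T s ->
     is_deriv_within (I0T T) K s
       (1 - 2 * fp (K s) * K s
        + 2 * RInt (fun u => Rf s u * (ps (Cs s u) - ps (q s) * n1 (q u) / n1 x)) 0 s
        + 2 * q s * vs1 (q s))) /\
  (forall s, I0T T s ->
     H s = RInt (fun u => Rf s u * (n1 (Cs s u) - n1 (q s) * n1 (q u) / n1 x)) 0 s
           + vs (q s)) /\
  (forall s, I0T T s -> Rf s s = 1 /\ C s s = K s) /\
  K 0 = 1 /\ q 0 = qo.

(* Uniqueness comes from a Picard-type contraction.  All unknowns of both solutions are bounded
   by some M on [0,T], and on bounded sets f' (being locally Lipschitz), nu', nu'', psi and v_star'
   are Lipschitz, so the right-hand sides of the equations are Lipschitz in the unknowns: if the two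
   solutions differ by at most X up to time a + del, their s-derivatives differ by at most c X.
   If moreover they agree up to time a, integrating in s from a (or, for R(s,t) and C(s,t) with
   t > a, from the diagonal, where R = 1 and C = K) bounds the difference by c X del <= X / 2.
   Iterating, the solutions agree up to a + del, and finitely many steps cover [0,T]. *)

From Stdlib Require Import Reals Lra Lia Arith ClassicalDescription.
From Coquelicot Require Import Coquelicot.
Open Scope R_scope.

Lemma cont_within_subset (D D' : R -> Prop) g x :
  (forall y, D' y -> D y) -> cont_within D g x -> cont_within D' g x.
Proof.
  intros HD. apply filterlim_filter_le_1.
  intros P. unfold within. apply filter_imp. auto.
Qed.

Lemma cont_within_ext (D : R -> Prop) g g' x :
  D x -> (forall y, D y -> g y = g' y) -> cont_within D g x -> cont_within D g' x.
Proof.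
  intros Dx Hgg' Hg. unfold cont_within. rewrite <- (Hgg' x Dx).
  exact (filterlim_within_ext _ _ _ Hgg' Hg).
Qed.

Lemma cont_within_const (D : R -> Prop) k x : cont_within D (fun _ => k) x.
Proof. apply filterlim_const. Qed.

Lemma cont_within_plus (D : R -> Prop) g h x :
  cont_within D g x -> cont_within D h x -> cont_within D (fun y => g y + h y) x.
Proof.
  intros Hg Hh. exact (filterlim_comp_2 _ _ Rplus Hg Hh (filterlim_plus (V := R_NormedModule) _ _)).
Qed.

Lemma cont_within_opp (D : R -> Prop) g x :
  cont_within D g x -> cont_within D (fun y => - g y) x.
Proof.
  intros Hg. exact (filterlim_comp _ _ _ g Ropp _ _ _ Hg (filterlim_opp (V := R_NormedModule) _)).
Qed.

Lemma cont_within_minus (D : R -> Prop) g h x :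
  cont_within D g x -> cont_within D h x -> cont_within D (fun y => g y - h y) x.
Proof. intros Hg Hh. apply cont_within_plus; [exact Hg | apply cont_within_opp, Hh]. Qed.

Lemma cont_within_mult (D : R -> Prop) g h x :
  cont_within D g x -> cont_within D h x -> cont_within D (fun y => g y * h y) x.
Proof.
  intros Hg Hh. exact (filterlim_comp_2 _ _ Rmult Hg Hh (filterlim_mult (K := R_AbsRing) _ _)).
Qed.

Lemma cont_within_comp (D : R -> Prop) g h x :
  cont_within D g x -> continuous h (g x) -> cont_within D (fun y => h (g y)) x.
Proof. intros Hg Hh. exact (filterlim_comp _ _ _ g h _ _ _ Hg Hh). Qed.

Lemma cont_within_of_punctured (D : R -> Prop) g x :
  filterlim g (within (fun y => D y /\ y <> x) (locally x)) (locally (g x)) ->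
  cont_within D g x.
Proof.
  intros Hg P HP. specialize (Hg P HP). unfold filtermap, within in *.
  refine (filter_imp _ _ _ Hg). intros y Hy Dy.
  destruct (Req_dec y x) as [->|Hyx]; [exact (locally_singleton _ _ HP) | auto].
Qed.

Lemma cont_within_of_deriv (D : R -> Prop) g x l :
  is_deriv_within D g x l -> cont_within D g x.
Proof.
  intros Hd. apply cont_within_of_punctured.
  set (D' := fun y => D y /\ y <> x).
  assert (Hincr : filterlim (fun y => y - x) (within D' (locally x)) (locally 0)).
  { apply (filterlim_filter_le_1 _ (filter_le_within _)).
    replace 0 with (x - x) by ring.
    apply (continuous_minus (fun y => y) (fun _ => x));
      [apply continuous_id | apply continuous_const]. }
  assert (Hg : filterlim (fun y => g x + (g y - g x) / (y - x) * (y - x))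
                 (within D' (locally x)) (locally (g x + l * 0))).
  { apply (filterlim_comp_2 _ _ Rplus (filterlim_const _)
             (filterlim_comp_2 _ _ Rmult Hd Hincr (filterlim_mult (K := R_AbsRing) _ _))
             (filterlim_plus (V := R_NormedModule) _ _)). }
  rewrite Rmult_0_r, Rplus_0_r in Hg.
  refine (filterlim_within_ext _ _ _ _ Hg).
  intros y [_ Hyx]. field. lra.
Qed.

(* Composing with [clamp a b] turns continuity within [a, b] into continuity on R, as required
   by Coquelicot's integrability criterion and by [MVT_gen]. *)
Definition clamp (a b x : R) : R := Rmax a (Rmin b x).

Lemma clamp_in a b x : a <= b -> a <= clamp a b x <= b.
Proof. intros. unfold clamp, Rmax, Rmin. repeat destruct Rle_dec; lra. Qed.

Lemma clamp_id a b x : a <= x <= b -> clamp a b x = x.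
Proof. intros. unfold clamp, Rmax, Rmin. repeat destruct Rle_dec; lra. Qed.

Lemma clamp_1_lipschitz a b x y : a <= b -> Rabs (clamp a b y - clamp a b x) <= Rabs (y - x).
Proof.
  intros. unfold clamp, Rmax, Rmin.
  repeat destruct Rle_dec; unfold Rabs; repeat destruct Rcase_abs; lra.
Qed.

Lemma continuous_comp_clamp a b g z : a <= b ->
  (forall x, a <= x <= b -> cont_within (fun y => a <= y <= b) g x) ->
  continuous (fun y => g (clamp a b y)) z.
Proof.
  intros Hab Hg.
  apply (filterlim_comp _ _ _ (clamp a b) g _
           (within (fun y => a <= y <= b) (locally (clamp a b z)))).
  - intros P [eps HP]. exists eps. intros y Hy. apply HP; [|apply clamp_in, Hab].
    exact (Rle_lt_trans _ _ _ (clamp_1_lipschitz a b z y Hab) Hy).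
  - apply Hg, clamp_in, Hab.
Qed.

Lemma ex_RInt_of_cont_within f lo hi : lo <= hi ->
  (forall x, lo <= x <= hi -> cont_within (fun y => lo <= y <= hi) f x) -> ex_RInt f lo hi.
Proof.
  intros Hlh Hf. apply ex_RInt_ext with (fun y => f (clamp lo hi y)).
  - intros x Hx. rewrite Rmin_left, Rmax_right in Hx by exact Hlh. apply f_equal, clamp_id. lra.
  - apply (ex_RInt_continuous (V := R_CompleteNormedModule)). intros z _.
    apply continuous_comp_clamp; assumption.
Qed.

Lemma is_derive_of_deriv_within (D : R -> Prop) g x l :
  is_deriv_within D g x l -> locally x D -> is_derive g x l.
Proof.
  intros Hd [rho HD]. apply is_derive_Reals. intros eps Heps.
  destruct (proj1 (filterlim_locally _ _) Hd (mkposreal eps Heps)) as [d Hq].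
  exists (mkposreal _ (Rmin_pos _ _ (cond_pos d) (cond_pos rho))). simpl. intros h Hh0 Hh.
  assert (Hxh : ball x (Rmin d rho) (x + h)).
  { change (Rabs (x + h - x) < Rmin d rho). now replace (x + h - x) with h by ring. }
  assert (Hne : x + h <> x) by (intros E; apply Hh0; lra).
  specialize (Hq (x + h) (ball_le _ _ _ (Rmin_l _ _) _ Hxh)
                 (conj (HD _ (ball_le _ _ _ (Rmin_r _ _) _ Hxh)) Hne)).
  replace (x + h - x) with h in Hq by ring. exact Hq.
Qed.

Lemma Rabs_incr_le_of_deriv g g' a b B : a <= b ->
  (forall x, a <= x <= b -> cont_within (fun y => a <= y <= b) g x) ->
  (forall x, a < x < b -> is_derive g x (g' x)) ->
  (forall x, a < x < b -> Rabs (g' x) <= B) ->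
  Rabs (g b - g a) <= B * (b - a).
Proof.
  intros Hab Hc Hd HB.
  destruct (Req_dec a b) as [<-|Hne].
  { rewrite !Rminus_diag, Rabs_R0, Rmult_0_r; lra. }
  assert (B0 : 0 <= B)
    by (apply Rle_trans with (Rabs (g' ((a + b) / 2))); [apply Rabs_pos | apply HB; lra]).
  (* [MVT_gen] may return an endpoint, where [g'] is not controlled: use 0 there. *)
  set (df := fun x => if Rlt_dec a x then if Rlt_dec x b then g' x else 0 else 0).
  destruct (MVT_gen (fun y => g (clamp a b y)) a b df) as [c [Hc1 Hc2]].
  - intros x Hx. rewrite Rmin_left, Rmax_right in Hx by exact Hab.
    unfold df. destruct Rlt_dec; [|lra]. destruct Rlt_dec; [|lra].
    apply is_derive_ext_loc with g; [|apply Hd; lra].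
    exists (mkposreal _ (Rmin_pos (x - a) (b - x) ltac:(lra) ltac:(lra))).
    intros t Ht. change (Rabs (t - x) < Rmin (x - a) (b - x)) in Ht. apply Rabs_def2 in Ht.
    pose proof (Rmin_l (x - a) (b - x)). pose proof (Rmin_r (x - a) (b - x)).
    rewrite clamp_id; lra.
  - intros x _. apply continuity_pt_filterlim, continuous_comp_clamp; assumption.
  - rewrite !clamp_id in Hc2 by lra. rewrite Hc2, Rabs_mult, (Rabs_right (b - a)) by lra.
    apply Rmult_le_compat_r; [lra|]. unfold df.
    destruct Rlt_dec; [destruct Rlt_dec|]; try (rewrite Rabs_R0; lra). apply HB; lra.
Qed.

Lemma Rabs_diff_incr_le (D : R -> Prop) g1 g2 l1 l2 lo s B : lo <= s ->
  (forall y, lo <= y <= s -> D y) ->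
  (forall x, lo < x < s -> locally x D) ->
  (forall x, lo <= x <= s -> is_deriv_within D g1 x (l1 x)) ->
  (forall x, lo <= x <= s -> is_deriv_within D g2 x (l2 x)) ->
  (forall x, lo < x < s -> Rabs (l1 x - l2 x) <= B) ->
  Rabs ((g1 s - g2 s) - (g1 lo - g2 lo)) <= B * (s - lo).
Proof.
  intros Hls HD Hint H1 H2 HB.
  apply (Rabs_incr_le_of_deriv (fun y => g1 y - g2 y) (fun y => l1 y - l2 y)); auto.
  - intros x Hx. apply cont_within_subset with D; [exact HD|].
    apply cont_within_minus; eapply cont_within_of_deriv; [apply H1 | apply H2]; exact Hx.
  - intros x Hx. apply (is_derive_minus g1 g2);
      eapply is_derive_of_deriv_within;
      [apply H1; lra | apply Hint, Hx | apply H2; lra | apply Hint, Hx].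
Qed.

Definition lipschitz_on (D : R -> Prop) (h : R -> R) (L : R) : Prop :=
  forall y z, D y -> D z -> Rabs (h y - h z) <= L * Rabs (y - z).

Definition lipschitz_on_bounded (h : R -> R) : Prop :=
  forall M, 0 <= M -> exists L, 0 <= L /\ lipschitz_on (fun y => Rabs y <= M) h L.

Lemma lipschitz_on_of_le (D : R -> Prop) h L :
  (forall y z, D y -> D z -> y <= z -> Rabs (h y - h z) <= L * Rabs (y - z)) ->
  lipschitz_on D h L.
Proof.
  intros H y z Dy Dz. destruct (Rle_dec y z) as [Hyz|Hyz]; [auto|].
  rewrite (Rabs_minus_sym (h y)), (Rabs_minus_sym y). apply H; auto; lra.
Qed.

Lemma lipschitz_on_glue h a c e L1 L2 :
  lipschitz_on (fun y => a <= y <= c) h L1 -> lipschitz_on (fun y => c <= y <= e) h L2 ->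
  lipschitz_on (fun y => a <= y <= e) h (Rmax L1 L2).
Proof.
  intros H1 H2. pose proof (Rmax_l L1 L2). pose proof (Rmax_r L1 L2).
  apply lipschitz_on_of_le. intros y z Hy Hz Hyz.
  destruct (Rle_dec z c); [|destruct (Rle_dec y c)].
  - eapply Rle_trans; [apply H1; lra|]. apply Rmult_le_compat_r; [apply Rabs_pos | lra].
  - replace (h y - h z) with ((h y - h c) + (h c - h z)) by ring.
    eapply Rle_trans; [apply Rabs_triang|].
    assert (A1 : Rabs (h y - h c) <= L1 * Rabs (y - c)) by (apply H1; lra).
    assert (A2 : Rabs (h c - h z) <= L2 * Rabs (c - z)) by (apply H2; lra).
    rewrite (Rabs_left1 (y - c)) in A1 by lra. rewrite (Rabs_left1 (c - z)) in A2 by lra.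
    rewrite (Rabs_left1 (y - z)) by lra.
    assert (L1 * - (y - c) <= Rmax L1 L2 * - (y - c)) by (apply Rmult_le_compat_r; lra).
    assert (L2 * - (c - z) <= Rmax L1 L2 * - (c - z)) by (apply Rmult_le_compat_r; lra).
    lra.
  - eapply Rle_trans; [apply H2; lra|]. apply Rmult_le_compat_r; [apply Rabs_pos | lra].
Qed.

Lemma lipschitz_on_segment_of_loc_lipschitz g :
  (forall x, 0 <= x -> exists delta L, 0 < delta /\
     forall y z, 0 <= y -> 0 <= z -> Rabs (y - x) < delta -> Rabs (z - x) < delta ->
       Rabs (g y - g z) <= L * Rabs (y - z)) ->
  forall M, 0 <= M -> exists L, 0 <= L /\ lipschitz_on (fun y => 0 <= y <= M) g L.
Proof.
  (* Compactness: the supremum [cs] of the [c] such that [g] is Lipschitz on [0, c] can be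
     pushed past by gluing on the local Lipschitz bound at [cs], unless it equals [M]. *)
  intros Hloc M HM.
  set (E := fun c => 0 <= c <= M /\ exists L, 0 <= L /\ lipschitz_on (fun y => 0 <= y <= c) g L).
  assert (E0 : E 0).
  { split; [lra|]. exists 0. split; [lra|]. intros y z Hy Hz.
    replace y with 0 by lra. replace z with 0 by lra. rewrite Rminus_diag, Rabs_R0; lra. }
  destruct (completeness E) as [cs [Hub Hlub]];
    [exists M; intros c [Hc _]; lra | exists 0; exact E0 |].
  assert (Hcs : 0 <= cs <= M) by (split; [apply Hub, E0 | apply Hlub; intros c [Hc _]; lra]).
  destruct (Hloc cs (proj1 Hcs)) as [d [L0 [Hd HL0]]].
  destruct (Classical_Prop.classic (exists c, E c /\ cs - d / 2 < c)) as [[c [Ec Hc]]|Hn].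
  2:{ exfalso. assert (cs <= cs - d / 2); [|lra]. apply Hlub. intros c Ec.
      destruct (Rle_dec c (cs - d / 2)); [assumption|].
      exfalso; apply Hn; exists c; split; [exact Ec | lra]. }
  assert (Hccs : c <= cs) by (apply Hub, Ec).
  destruct Ec as [Hc0 [L1 [HL1 Hl1]]].
  set (c' := Rmin M (cs + d / 2)).
  assert (Hc' : cs <= c' <= cs + d / 2 /\ c' <= M).
  { unfold c'. pose proof (Rmin_l M (cs + d / 2)). pose proof (Rmin_r M (cs + d / 2)).
    unfold Rmin; destruct Rle_dec; lra. }
  assert (Ec' : E c').
  { split; [lra|]. exists (Rmax L1 L0).
    split; [apply Rle_trans with L1; [exact HL1 | apply Rmax_l]|].
    apply lipschitz_on_glue with c; [exact Hl1|].
    intros y z Hy Hz. apply HL0; try lra; apply Rabs_def1; lra. }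
  assert (c' <= cs) by (apply Hub, Ec').
  assert (Hc'M : c' = M) by (unfold c' in *; unfold Rmin in *; destruct Rle_dec; lra).
  rewrite <- Hc'M. exact (proj2 Ec').
Qed.

Lemma Rabs_le_of_lipschitz_on_ball M h L y : 0 <= M -> 0 <= L ->
  lipschitz_on (fun y => Rabs y <= M) h L -> Rabs y <= M -> Rabs (h y) <= Rabs (h 0) + L * M.
Proof.
  intros HM HL H Hy. replace (h y) with ((h y - h 0) + h 0) by ring.
  eapply Rle_trans; [apply Rabs_triang|]. rewrite Rplus_comm. apply Rplus_le_compat_l.
  eapply Rle_trans; [apply H; [exact Hy | rewrite Rabs_R0; exact HM]|].
  rewrite Rminus_0_r. apply Rmult_le_compat_l; assumption.
Qed.

Lemma lipschitz_on_bounded_ext f g : (forall r, f r = g r) ->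
  lipschitz_on_bounded f -> lipschitz_on_bounded g.
Proof.
  intros E H M HM. destruct (H M HM) as [L [HL H']]. exists L; split; [exact HL|].
  intros y z Hy Hz. rewrite <- !E. auto.
Qed.

Lemma lipschitz_on_bounded_const k : lipschitz_on_bounded (fun _ => k).
Proof.
  intros M HM. exists 0. split; [lra|]. intros y z _ _. rewrite Rminus_diag, Rabs_R0. lra.
Qed.

Lemma lipschitz_on_bounded_id : lipschitz_on_bounded (fun r => r).
Proof. intros M HM. exists 1. split; [lra|]. intros y z _ _. lra. Qed.

Lemma lipschitz_on_bounded_plus f g : lipschitz_on_bounded f -> lipschitz_on_bounded g ->
  lipschitz_on_bounded (fun r => f r + g r).
Proof.
  intros Hf Hg M HM. destruct (Hf M HM) as [L1 [H1 H1']]. destruct (Hg M HM) as [L2 [H2 H2']].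
  exists (L1 + L2). split; [lra|]. intros y z Hy Hz.
  replace (f y + g y - (f z + g z)) with ((f y - f z) + (g y - g z)) by ring.
  eapply Rle_trans; [apply Rabs_triang|].
  specialize (H1' y z Hy Hz). specialize (H2' y z Hy Hz). lra.
Qed.

Lemma lipschitz_on_bounded_mult f g : lipschitz_on_bounded f -> lipschitz_on_bounded g ->
  lipschitz_on_bounded (fun r => f r * g r).
Proof.
  intros Hf Hg M HM. destruct (Hf M HM) as [L1 [H1 H1']]. destruct (Hg M HM) as [L2 [H2 H2']].
  set (Bf := Rabs (f 0) + L1 * M). set (Bg := Rabs (g 0) + L2 * M).
  assert (0 <= Bf)
    by (pose proof (Rabs_pos (f 0)); pose proof (Rmult_le_pos _ _ H1 HM); unfold Bf; lra).
  assert (0 <= Bg)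
    by (pose proof (Rabs_pos (g 0)); pose proof (Rmult_le_pos _ _ H2 HM); unfold Bg; lra).
  exists (Bf * L2 + Bg * L1).
  split; [pose proof (Rmult_le_pos Bf L2); pose proof (Rmult_le_pos Bg L1); lra|].
  intros y z Hy Hz.
  replace (f y * g y - f z * g z) with (f y * (g y - g z) + (f y - f z) * g z) by ring.
  eapply Rle_trans; [apply Rabs_triang|]. rewrite !Rabs_mult.
  pose proof (Rabs_le_of_lipschitz_on_ball M f L1 y HM H1 H1' Hy) as Bfy.
  pose proof (Rabs_le_of_lipschitz_on_ball M g L2 z HM H2 H2' Hz) as Bgz.
  specialize (H1' y z Hy Hz). specialize (H2' y z Hy Hz).
  assert (Rabs (f y) * Rabs (g y - g z) <= Bf * (L2 * Rabs (y - z)))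
    by (apply Rmult_le_compat; auto using Rabs_pos).
  assert (Rabs (f y - f z) * Rabs (g z) <= (L1 * Rabs (y - z)) * Bg)
    by (apply Rmult_le_compat; auto using Rabs_pos).
  nra.
Qed.

Lemma lipschitz_on_bounded_pow n : lipschitz_on_bounded (fun r => r ^ n).
Proof.
  induction n as [|n IH].
  - exact (lipschitz_on_bounded_const 1).
  - apply (lipschitz_on_bounded_mult (fun r => r)); [apply lipschitz_on_bounded_id | exact IH].
Qed.

Lemma lipschitz_on_bounded_monomial k n : lipschitz_on_bounded (fun r => k * r ^ n).
Proof.
  apply lipschitz_on_bounded_mult;
    [apply lipschitz_on_bounded_const | apply lipschitz_on_bounded_pow].
Qed.

Lemma lipschitz_on_bounded_sum_n_m (F : nat -> R -> R) n k :
  (forall p, lipschitz_on_bounded (F p)) ->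
  lipschitz_on_bounded (fun r => sum_n_m (fun p => F p r) n k).
Proof.
  intros HF.
  assert (Hempty : forall j, (j < n)%nat ->
            lipschitz_on_bounded (fun r => sum_n_m (fun p => F p r) n j)).
  { intros j Hj. apply lipschitz_on_bounded_ext with (fun _ => 0);
      [intros r; rewrite sum_n_m_zero; [reflexivity | exact Hj] | apply lipschitz_on_bounded_const]. }
  induction k as [|k IH].
  - destruct n as [|n]; [|apply Hempty; lia].
    apply lipschitz_on_bounded_ext with (F 0%nat); [intros r; now rewrite sum_n_n | apply HF].
  - destruct (le_lt_dec n (S k)) as [Hnk|Hkn]; [|apply Hempty, Hkn].
    apply lipschitz_on_bounded_ext with (fun r => sum_n_m (fun p => F p r) n k + F (S k) r);
      [intros r; rewrite sum_n_Sm; [reflexivity | exact Hnk]|].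
    apply lipschitz_on_bounded_plus; [exact IH | apply HF].
Qed.

Lemma continuous_of_lipschitz_on_bounded h z : lipschitz_on_bounded h -> continuous h z.
Proof.
  intros H. apply filterlim_locally. intros eps.
  destruct (H (Rabs z + 1)) as [L [HL H']]; [pose proof (Rabs_pos z); lra|].
  assert (Hd : 0 < eps / (L + 1)) by (apply Rdiv_lt_0_compat; [apply cond_pos | lra]).
  exists (mkposreal _ (Rmin_pos 1 (eps / (L + 1)) Rlt_0_1 Hd)).
  intros w Hw. change (Rabs (w - z) < Rmin 1 (eps / (L + 1))) in Hw.
  change (Rabs (h w - h z) < eps).
  pose proof (Rmin_l 1 (eps / (L + 1))). pose proof (Rmin_r 1 (eps / (L + 1))).
  assert (Rabs w <= Rabs z + 1).
  { replace w with ((w - z) + z) by ring. eapply Rle_trans; [apply Rabs_triang | lra]. }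
  eapply Rle_lt_trans; [apply H'; [assumption | pose proof (Rabs_pos z); lra]|].
  apply Rle_lt_trans with ((L + 1) * Rabs (w - z)).
  { apply Rmult_le_compat_r; [apply Rabs_pos | lra]. }
  apply Rlt_le_trans with ((L + 1) * (eps / (L + 1))); [apply Rmult_lt_compat_l; lra|].
  right. field. lra.
Qed.

Lemma lipschitz_on_bounded_nu1 m b : lipschitz_on_bounded (nu1 m b).
Proof.
  apply (lipschitz_on_bounded_sum_n_m (fun p r => INR p * b p ^ 2 * r ^ (p - 1))).
  intros p. apply lipschitz_on_bounded_monomial.
Qed.

Lemma lipschitz_on_bounded_nu2 m b : lipschitz_on_bounded (nu2 m b).
Proof.
  apply (lipschitz_on_bounded_sum_n_m (fun p r => INR p * INR (p - 1) * b p ^ 2 * r ^ (p - 2))).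
  intros p. apply lipschitz_on_bounded_monomial.
Qed.

Lemma lipschitz_on_bounded_psi m b : lipschitz_on_bounded (psi m b).
Proof.
  apply lipschitz_on_bounded_plus; [apply lipschitz_on_bounded_mult|].
  - apply lipschitz_on_bounded_id.
  - apply lipschitz_on_bounded_nu2.
  - apply lipschitz_on_bounded_nu1.
Qed.

Lemma lipschitz_on_bounded_vstar1 m b qs E G : lipschitz_on_bounded (vstar1 m b qs E G).
Proof.
  unfold vstar1. destruct excluded_middle_informative.
  - apply lipschitz_on_bounded_monomial.
  - apply (lipschitz_on_bounded_sum_n_m
             (fun p r => INR p * b p ^ 2 * vcoef m b qs E G p * r ^ (p - 1))).
    intros p. apply lipschitz_on_bounded_monomial.
Qed.

(* Propagates the distance [X] between the two solutions through the right-hand sides; the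
   bound [B] is carried along because it is what makes products Lipschitz. *)
Definition close_pair (X a b c B : R) : Prop :=
  Rabs (a - b) <= c * X /\ Rabs a <= B /\ Rabs b <= B.

Lemma close_pair_refl X k : close_pair X k k 0 (Rabs k).
Proof. split; [rewrite Rminus_diag, Rabs_R0; lra | split; lra]. Qed.

Lemma close_pair_plus X a1 b1 c1 B1 a2 b2 c2 B2 :
  close_pair X a1 b1 c1 B1 -> close_pair X a2 b2 c2 B2 ->
  close_pair X (a1 + a2) (b1 + b2) (c1 + c2) (B1 + B2).
Proof.
  intros [H1 [H1a H1b]] [H2 [H2a H2b]]. split; [|split]; cycle 1.
  - eapply Rle_trans; [apply Rabs_triang | lra].
  - eapply Rle_trans; [apply Rabs_triang | lra].
  - replace (a1 + a2 - (b1 + b2)) with ((a1 - b1) + (a2 - b2)) by ring.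
    eapply Rle_trans; [apply Rabs_triang | lra].
Qed.

Lemma close_pair_opp X a b c B : close_pair X a b c B -> close_pair X (- a) (- b) c B.
Proof.
  intros [H [Ha Hb]]. rewrite <- (Rabs_Ropp a), <- (Rabs_Ropp b) in *.
  split; [|split]; [|assumption..].
  replace (- a - - b) with (- (a - b)) by ring. rewrite Rabs_Ropp. exact H.
Qed.

Lemma close_pair_minus X a1 b1 c1 B1 a2 b2 c2 B2 :
  close_pair X a1 b1 c1 B1 -> close_pair X a2 b2 c2 B2 ->
  close_pair X (a1 - a2) (b1 - b2) (c1 + c2) (B1 + B2).
Proof. intros H1 H2. apply close_pair_plus; [exact H1 | apply close_pair_opp, H2]. Qed.

Lemma close_pair_mult X a1 b1 c1 B1 a2 b2 c2 B2 : 0 <= X ->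
  close_pair X a1 b1 c1 B1 -> close_pair X a2 b2 c2 B2 ->
  close_pair X (a1 * a2) (b1 * b2) (B1 * c2 + B2 * c1) (B1 * B2).
Proof.
  intros HX [H1 [H1a H1b]] [H2 [H2a H2b]].
  assert (0 <= B1) by (pose proof (Rabs_pos a1); lra).
  assert (0 <= B2) by (pose proof (Rabs_pos a2); lra).
  split; [|split]; [|rewrite Rabs_mult; apply Rmult_le_compat; auto using Rabs_pos..].
  replace (a1 * a2 - b1 * b2) with (a1 * (a2 - b2) + (a1 - b1) * b2) by ring.
  eapply Rle_trans; [apply Rabs_triang|]. rewrite !Rabs_mult.
  assert (Rabs a1 * Rabs (a2 - b2) <= B1 * (c2 * X))
    by (apply Rmult_le_compat; auto using Rabs_pos).
  assert (Rabs (a1 - b1) * Rabs b2 <= (c1 * X) * B2)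
    by (apply Rmult_le_compat; auto using Rabs_pos).
  nra.
Qed.

Lemma close_pair_div X a b c B k : 0 <= X -> close_pair X a b c B ->
  close_pair X (a / k) (b / k) (Rabs (/ k) * c) (B * Rabs (/ k)).
Proof.
  intros HX H.
  destruct (close_pair_mult X a b c B (/ k) (/ k) 0 (Rabs (/ k)) HX H (close_pair_refl X (/ k)))
    as [Hd Hab].
  split; [|exact Hab]. eapply Rle_trans; [exact Hd | right; ring].
Qed.

Lemma close_pair_lipschitz X M h L a b c :
  lipschitz_on (fun y => Rabs y <= M) h L -> 0 <= M -> 0 <= L -> close_pair X a b c M ->
  close_pair X (h a) (h b) (L * c) (Rabs (h 0) + L * M).
Proof.
  intros Hl HM HL [H [Ha Hb]].
  split; [|split]; [|apply (Rabs_le_of_lipschitz_on_ball M); assumption ..].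
  eapply Rle_trans; [apply Hl; assumption|].
  rewrite Rmult_assoc. apply Rmult_le_compat_l; assumption.
Qed.

Lemma close_pair_lipschitz_nonneg X M h L a b c :
  lipschitz_on (fun y => 0 <= y <= M) h L -> 0 <= M -> 0 <= L ->
  0 <= a -> 0 <= b -> close_pair X a b c M ->
  close_pair X (h a) (h b) (L * c) (Rabs (h 0) + L * M).
Proof.
  intros Hl HM HL Ha0 Hb0 [H [Ha Hb]].
  rewrite Rabs_right in Ha, Hb by lra.
  assert (Hbound : forall y, 0 <= y <= M -> Rabs (h y) <= Rabs (h 0) + L * M).
  { intros y Hy. replace (h y) with ((h y - h 0) + h 0) by ring.
    eapply Rle_trans; [apply Rabs_triang|]. rewrite Rplus_comm. apply Rplus_le_compat_l.
    eapply Rle_trans; [apply Hl; lra|]. rewrite Rminus_0_r, Rabs_right by lra.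
    apply Rmult_le_compat_l; lra. }
  split; [|split; apply Hbound; lra].
  eapply Rle_trans; [apply Hl; lra|]. rewrite Rmult_assoc. apply Rmult_le_compat_l; assumption.
Qed.

Lemma close_pair_RInt X T f1 f2 lo hi c B : 0 <= X ->
  ex_RInt f1 lo hi -> ex_RInt f2 lo hi -> 0 <= hi - lo <= T ->
  (forall u, lo <= u <= hi -> close_pair X (f1 u) (f2 u) c B) ->
  close_pair X (RInt f1 lo hi) (RInt f2 lo hi) (c * T) (B * T).
Proof.
  intros HX E1 E2 Hlh H.
  destruct (H lo) as [H0 [H0a H0b]]; [lra|].
  assert (Hc : 0 <= c * X) by (pose proof (Rabs_pos (f1 lo - f2 lo)); lra).
  assert (HB : 0 <= B) by (pose proof (Rabs_pos (f1 lo)); lra).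
  assert (Hint : forall f, ex_RInt f lo hi -> forall K, 0 <= K ->
            (forall u, lo <= u <= hi -> Rabs (f u) <= K) -> Rabs (RInt f lo hi) <= K * T).
  { intros f Ef K HK Hf. eapply Rle_trans; [apply abs_RInt_le_const; [lra | exact Ef | exact Hf]|].
    rewrite (Rmult_comm (hi - lo)). apply Rmult_le_compat_l; lra. }
  split; [|split].
  - rewrite <- (RInt_minus (V := R_CompleteNormedModule)) by assumption.
    rewrite Rmult_assoc, (Rmult_comm T), <- Rmult_assoc.
    apply Hint; [apply (ex_RInt_minus (V := R_NormedModule)); assumption | exact Hc | apply H].
  - apply Hint; [exact E1 | exact HB | apply H].
  - apply Hint; [exact E2 | exact HB | apply H].
Qed.

Lemma C1b_triangle_cont_fst T g t lo hi u : C1b_triangle T g ->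
  0 <= t <= lo -> lo <= u <= hi -> hi <= T ->
  cont_within (fun y => lo <= y <= hi) (fun y => g y t) u.
Proof.
  intros [gs [gt [Hs _]]] Ht Hu HhT.
  apply cont_within_subset with (fun s' => DeltaT T (s', t));
    [intros y Hy; unfold DeltaT; simpl; lra|].
  eapply cont_within_of_deriv, Hs. unfold DeltaT; simpl; lra.
Qed.

Lemma C1b_triangle_cont_snd T g s lo hi u : C1b_triangle T g ->
  0 <= lo -> lo <= u <= hi -> hi <= s <= T ->
  cont_within (fun y => lo <= y <= hi) (fun y => g s y) u.
Proof.
  intros [gs [gt [_ [Ht _]]]] Hlo Hu Hs.
  apply cont_within_subset with (fun t' => DeltaT T (s, t'));
    [intros y Hy; unfold DeltaT; simpl; lra|].
  eapply cont_within_of_deriv, Ht. unfold DeltaT; simpl; lra.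
Qed.

Lemma C1b_interval_cont T g lo hi u : C1b_interval T g ->
  0 <= lo -> lo <= u <= hi -> hi <= T -> cont_within (fun y => lo <= y <= hi) g u.
Proof.
  intros [g' [Hd _]] Hlo Hu HhT.
  apply cont_within_subset with (I0T T); [intros y Hy; unfold I0T; lra|].
  eapply cont_within_of_deriv, Hd. unfold I0T; lra.
Qed.

Lemma Csym_cont_snd T C s lo hi u : C1b_triangle T C ->
  0 <= lo -> lo <= u <= hi -> hi <= s <= T ->
  cont_within (fun y => lo <= y <= hi) (fun y => Csym C s y) u.
Proof.
  intros HC Hlo Hu Hs. apply cont_within_ext with (fun y => C s y); [lra| |].
  - intros y Hy. unfold Csym. destruct Rle_dec; [reflexivity | lra].
  - exact (C1b_triangle_cont_snd T C s lo hi u HC Hlo Hu Hs).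
Qed.

Lemma Csym_cont_fst_below T C t lo hi u : C1b_triangle T C ->
  0 <= lo -> lo <= u <= hi -> hi <= t <= T ->
  cont_within (fun y => lo <= y <= hi) (fun y => Csym C y t) u.
Proof.
  intros HC Hlo Hu Ht. apply cont_within_ext with (fun y => C t y); [lra| |].
  - intros y Hy. unfold Csym. destruct Rle_dec; [replace y with t by lra|]; reflexivity.
  - exact (C1b_triangle_cont_snd T C t lo hi u HC Hlo Hu Ht).
Qed.

Lemma Csym_cont_fst_above T C t lo hi u : C1b_triangle T C ->
  0 <= t <= lo -> lo <= u <= hi -> hi <= T ->
  cont_within (fun y => lo <= y <= hi) (fun y => Csym C y t) u.
Proof.
  intros HC Ht Hu HhT. apply cont_within_ext with (fun y => C y t); [lra| |].
  - intros y Hy. unfold Csym. destruct Rle_dec; [reflexivity | lra].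
  - exact (C1b_triangle_cont_fst T C t lo hi u HC Ht Hu HhT).
Qed.

Ltac cont_within_tac m b :=
  repeat match goal with
  | |- cont_within _ (fun _ => ?k) _ => apply cont_within_const
  | |- cont_within _ (fun _ => _ + _) _ => apply cont_within_plus
  | |- cont_within _ (fun _ => _ - _) _ => apply cont_within_minus
  | |- cont_within _ (fun _ => - _) _ => apply cont_within_opp
  | |- cont_within _ (fun _ => _ * _) _ => apply cont_within_mult
  | |- cont_within _ (fun _ => _ / _) _ => unfold Rdiv
  | |- cont_within _ (fun _ => nu1 m b _) _ => apply (cont_within_comp _ _ (nu1 m b));
      [|apply continuous_of_lipschitz_on_bounded, lipschitz_on_bounded_nu1]
  | |- cont_within _ (fun _ => nu2 m b _) _ => apply (cont_within_comp _ _ (nu2 m b));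
      [|apply continuous_of_lipschitz_on_bounded, lipschitz_on_bounded_nu2]
  | |- cont_within _ (fun _ => psi m b _) _ => apply (cont_within_comp _ _ (psi m b));
      [|apply continuous_of_lipschitz_on_bounded, lipschitz_on_bounded_psi]
  | |- cont_within _ (fun y => Csym _ y _) _ =>
      first [ eapply Csym_cont_fst_below; [eassumption | lra ..]
            | eapply Csym_cont_fst_above; [eassumption | lra ..] ]
  | |- cont_within _ (Csym _ _) _ => eapply Csym_cont_snd; [eassumption | lra ..]
  | |- cont_within _ (fun y => _ y _) _ => eapply C1b_triangle_cont_fst; [eassumption | lra ..]
  | |- cont_within _ (_ _) _ => eapply C1b_triangle_cont_snd; [eassumption | lra ..]
  | |- cont_within _ _ _ => eapply C1b_interval_cont; [eassumption | lra ..]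
  end.

Lemma is_solution_ex_RInt {m b qs qo E G fp T Rf C q K H} s t :
  is_solution m b qs qo E G fp T Rf C q K H -> 0 <= t <= s -> s <= T ->
  ex_RInt (fun u => Rf u t * Rf s u * nu2 m b (Csym C s u)) t s /\
  ex_RInt (fun u => Rf s u * (nu2 m b (Csym C s u) * Csym C u t -
           q t * nu1 m b (q u) * nu2 m b (q s) / nu1 m b (qs ^ 2))) 0 s /\
  ex_RInt (fun u => Rf t u * (nu1 m b (Csym C s u) -
           nu1 m b (q s) * nu1 m b (q u) / nu1 m b (qs ^ 2))) 0 t /\
  ex_RInt (fun u => Rf s u * (q u * nu2 m b (Csym C s u) -
           qs ^ 2 * nu1 m b (q u) * nu2 m b (q s) / nu1 m b (qs ^ 2))) 0 s /\
  ex_RInt (fun u => Rf s u * (psi m b (Csym C s u) -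
           psi m b (q s) * nu1 m b (q u) / nu1 m b (qs ^ 2))) 0 s.
Proof.
  intros (HR & HC & Hq & _) Hts HsT.
  assert (Hcont : forall lo hi f, 0 <= lo <= hi ->
            (forall u, lo <= u <= hi -> cont_within (fun y => lo <= y <= hi) f u) -> ex_RInt f lo hi)
    by (intros lo hi f Hlh; apply ex_RInt_of_cont_within; lra).
  (* [Csym C u t] switches branch at [u = t], hence the split of the second integral there. *)
  split; [|split; [apply (ex_RInt_Chasles _ 0 t s)|split; [|split]]]; apply Hcont; try lra;
    intros u Hu; cont_within_tac m b.
Qed.

Lemma Rabs_diff_le_on_I0T T g1 g2 l1 l2 a s B : 0 <= a <= s -> s <= T -> g1 a = g2 a ->
  (forall x, I0T T x -> is_deriv_within (I0T T) g1 x (l1 x)) ->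
  (forall x, I0T T x -> is_deriv_within (I0T T) g2 x (l2 x)) ->
  (forall x, a < x < s -> Rabs (l1 x - l2 x) <= B) ->
  Rabs (g1 s - g2 s) <= B * (s - a).
Proof.
  intros Has HsT Ea H1 H2 HB.
  replace (g1 s - g2 s) with ((g1 s - g2 s) - (g1 a - g2 a)) by (rewrite Ea; ring).
  apply (Rabs_diff_incr_le (I0T T) g1 g2 l1 l2);
    [lra | intros y Hy; unfold I0T; lra | | | | exact HB].
  - intros x Hx. exists (mkposreal _ (Rmin_pos x (T - x) ltac:(lra) ltac:(lra))).
    intros y Hy. change (Rabs (y - x) < Rmin x (T - x)) in Hy. apply Rabs_def2 in Hy.
    pose proof (Rmin_l x (T - x)). pose proof (Rmin_r x (T - x)). unfold I0T. lra.
  - intros x Hx. apply H1. unfold I0T. lra.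
  - intros x Hx. apply H2. unfold I0T. lra.
Qed.

Lemma Rabs_diff_le_on_row T (g1 g2 l1 l2 : R -> R -> R) t lo s B : 0 <= t <= lo -> lo <= s <= T ->
  (forall x, DeltaT T (x, t) ->
     is_deriv_within (fun x' => DeltaT T (x', t)) (fun x' => g1 x' t) x (l1 x t)) ->
  (forall x, DeltaT T (x, t) ->
     is_deriv_within (fun x' => DeltaT T (x', t)) (fun x' => g2 x' t) x (l2 x t)) ->
  (forall x, lo < x < s -> Rabs (l1 x t - l2 x t) <= B) ->
  Rabs ((g1 s t - g2 s t) - (g1 lo t - g2 lo t)) <= B * (s - lo).
Proof.
  intros Ht Hs H1 H2 HB.
  apply (Rabs_diff_incr_le (fun x => DeltaT T (x, t)) (fun x => g1 x t) (fun x => g2 x t)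
           (fun x => l1 x t) (fun x => l2 x t));
    [lra | intros y Hy; unfold DeltaT; simpl; lra | | | | exact HB].
  - intros x Hx. exists (mkposreal _ (Rmin_pos (x - t) (T - x) ltac:(lra) ltac:(lra))).
    intros y Hy. change (Rabs (y - x) < Rmin (x - t) (T - x)) in Hy. apply Rabs_def2 in Hy.
    pose proof (Rmin_l (x - t) (T - x)). pose proof (Rmin_r (x - t) (T - x)).
    unfold DeltaT; simpl. lra.
  - intros x Hx. apply H1. unfold DeltaT; simpl. lra.
  - intros x Hx. apply H2. unfold DeltaT; simpl. lra.
Qed.

Lemma Rle_0_of_le_halvings x K : (forall n, x <= K * (1 / 2) ^ n) -> x <= 0.
Proof.
  intros H.
  assert (Hlim : is_lim_seq (fun n => K * (1 / 2) ^ n) 0).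
  { replace (Finite 0) with (Rbar_mult K 0) by (simpl; now rewrite Rmult_0_r).
    apply is_lim_seq_scal_l, is_lim_seq_geom. rewrite Rabs_right; lra. }
  exact (is_lim_seq_le (fun _ => x) _ x 0 H (is_lim_seq_const x) Hlim).
Qed.

Definition rhs_R (m : nat) (b : nat -> R) (fp : R -> R) (Rf C : R -> R -> R) (K : R -> R)
  (s t : R) : R :=
  - fp (K s) * Rf s t + RInt (fun u => Rf u t * Rf s u * nu2 m b (Csym C s u)) t s.

Definition rhs_C (m : nat) (b : nat -> R) (qs E G : R) (fp : R -> R) (Rf C : R -> R -> R)
  (q K : R -> R) (s t : R) : R :=
  - fp (K s) * C s t
  + RInt (fun u => Rf s u * (nu2 m b (Csym C s u) * Csym C u t -
            q t * nu1 m b (q u) * nu2 m b (q s) / nu1 m b (qs ^ 2))) 0 s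
  + RInt (fun u => Rf t u * (nu1 m b (Csym C s u) -
            nu1 m b (q s) * nu1 m b (q u) / nu1 m b (qs ^ 2))) 0 t
  + q t * vstar1 m b qs E G (q s).

Definition rhs_q (m : nat) (b : nat -> R) (qs E G : R) (fp : R -> R) (Rf C : R -> R -> R)
  (q K : R -> R) (s : R) : R :=
  - fp (K s) * q s
  + RInt (fun u => Rf s u * (q u * nu2 m b (Csym C s u) -
            qs ^ 2 * nu1 m b (q u) * nu2 m b (q s) / nu1 m b (qs ^ 2))) 0 s
  + qs ^ 2 * vstar1 m b qs E G (q s).

Definition rhs_K (m : nat) (b : nat -> R) (qs E G : R) (fp : R -> R) (Rf C : R -> R -> R)
  (q K : R -> R) (s : R) : R :=
  1 - 2 * fp (K s) * K s
  + 2 * RInt (fun u => Rf s u * (psi m b (Csym C s u) -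
                psi m b (q s) * nu1 m b (q u) / nu1 m b (qs ^ 2))) 0 s
  + 2 * q s * vstar1 m b qs E G (q s).

Lemma is_solution_derivatives {m b qs qo E G fp T Rf C q K H} :
  is_solution m b qs qo E G fp T Rf C q K H ->
  (forall s t, DeltaT T (s, t) -> is_deriv_within (fun s' => DeltaT T (s', t))
     (fun s' => Rf s' t) s (rhs_R m b fp Rf C K s t)) /\
  (forall s t, DeltaT T (s, t) -> is_deriv_within (fun s' => DeltaT T (s', t))
     (fun s' => C s' t) s (rhs_C m b qs E G fp Rf C q K s t)) /\
  (forall s, I0T T s -> is_deriv_within (I0T T) q s (rhs_q m b qs E G fp Rf C q K s)) /\
  (forall s, I0T T s -> is_deriv_within (I0T T) K s (rhs_K m b qs E G fp Rf C q K s)).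
Proof.
  intros Hsol. unfold is_solution in Hsol. cbv zeta in Hsol.
  destruct Hsol as (_ & _ & _ & _ & _ & _ & DR & DC & Dq & DK & _).
  exact (conj DR (conj DC (conj Dq DK))).
Qed.

Lemma is_solution_boundary {m b qs qo E G fp T Rf C q K H} :
  is_solution m b qs qo E G fp T Rf C q K H ->
  (forall s, I0T T s -> Rf s s = 1 /\ C s s = K s) /\ K 0 = 1 /\ q 0 = qo.
Proof.
  intros Hsol. unfold is_solution in Hsol. cbv zeta in Hsol.
  destruct Hsol as (_ & _ & _ & _ & _ & _ & _ & _ & _ & _ & _ & Hdiag & HK0 & Hq0).
  exact (conj Hdiag (conj HK0 Hq0)).
Qed.

Lemma is_solution_H {m b qs qo E G fp T Rf C q K H} :
  is_solution m b qs qo E G fp T Rf C q K H ->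
  forall s, I0T T s ->
    H s = RInt (fun u => Rf s u * (nu1 m b (Csym C s u) -
            nu1 m b (q s) * nu1 m b (q u) / nu1 m b (qs ^ 2))) 0 s + vstar m b qs E G (q s).
Proof. intros Hsol. unfold is_solution in Hsol. cbv zeta in Hsol. apply Hsol. Qed.

Lemma eq_of_Rabs_minus_le_0 x y : Rabs (x - y) <= 0 -> x = y.
Proof. unfold Rabs. destruct Rcase_abs; lra. Qed.

Lemma C1b_triangle_bounded T g : C1b_triangle T g ->
  exists M, 0 <= M /\ forall s t, DeltaT T (s, t) -> Rabs (g s t) <= M.
Proof.
  intros (gs & gt & _ & _ & _ & M & HM). exists (Rabs M). split; [apply Rabs_pos|].
  intros s t H. eapply Rle_trans; [apply (HM s t H) | apply RRle_abs].
Qed.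

Lemma C1b_interval_bounded T g : C1b_interval T g ->
  exists M, 0 <= M /\ forall s, I0T T s -> Rabs (g s) <= M.
Proof.
  intros (g' & _ & _ & M & HM). exists (Rabs M). split; [apply Rabs_pos|].
  intros s H. eapply Rle_trans; [apply (HM s H) | apply RRle_abs].
Qed.

Section TwoSolutions.

Variables (m : nat) (b : nat -> R) (qs qo E G : R) (fp : R -> R) (T : R).
Variables (R1 C1 : R -> R -> R) (q1 K1 H1 : R -> R) (R2 C2 : R -> R -> R) (q2 K2 H2 : R -> R).
Hypothesis sol1 : is_solution m b qs qo E G fp T R1 C1 q1 K1 H1.
Hypothesis sol2 : is_solution m b qs qo E G fp T R2 C2 q2 K2 H2.

Definition dist_le (X a : R) : Prop :=
  (forall s t, DeltaT T (s, t) -> s <= a ->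
     Rabs (R1 s t - R2 s t) <= X /\ Rabs (C1 s t - C2 s t) <= X) /\
  (forall s, I0T T s -> s <= a -> Rabs (q1 s - q2 s) <= X /\ Rabs (K1 s - K2 s) <= X).

Definition rhs_dist_le (cR cC cq cK X a : R) : Prop :=
  (forall s t, DeltaT T (s, t) -> s <= a ->
     Rabs (rhs_R m b fp R1 C1 K1 s t - rhs_R m b fp R2 C2 K2 s t) <= cR * X) /\
  (forall s t, DeltaT T (s, t) -> s <= a ->
     Rabs (rhs_C m b qs E G fp R1 C1 q1 K1 s t - rhs_C m b qs E G fp R2 C2 q2 K2 s t) <= cC * X) /\
  (forall s, I0T T s -> s <= a ->
     Rabs (rhs_q m b qs E G fp R1 C1 q1 K1 s - rhs_q m b qs E G fp R2 C2 q2 K2 s) <= cq * X) /\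
  (forall s, I0T T s -> s <= a ->
     Rabs (rhs_K m b qs E G fp R1 C1 q1 K1 s - rhs_K m b qs E G fp R2 C2 q2 K2 s) <= cK * X).

Lemma rhs_dist_le_weaken cR cC cq cK c X a : 0 <= X ->
  cR <= c -> cC <= c -> cq <= c -> cK <= c ->
  rhs_dist_le cR cC cq cK X a -> rhs_dist_le c c c c X a.
Proof.
  intros HX HR HC Hq HK (BR & BC & Bq & BK).
  assert (Hle : forall k x, k <= c -> x <= k * X -> x <= c * X)
    by (intros k x Hk Hx; eapply Rle_trans; [exact Hx | apply Rmult_le_compat_r; assumption]).
  split; [|split; [|split]]; intros.
  - apply (Hle cR); [exact HR | apply BR; assumption].
  - apply (Hle cC); [exact HC | apply BC; assumption].
  - apply (Hle cq); [exact Hq | apply Bq; assumption].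
  - apply (Hle cK); [exact HK | apply BK; assumption].
Qed.

Lemma solutions_bounded : exists M, 0 <= M /\
  (forall s t, DeltaT T (s, t) ->
     Rabs (R1 s t) <= M /\ Rabs (R2 s t) <= M /\ Rabs (C1 s t) <= M /\ Rabs (C2 s t) <= M) /\
  (forall s, I0T T s ->
     Rabs (q1 s) <= M /\ Rabs (q2 s) <= M /\ Rabs (K1 s) <= M /\ Rabs (K2 s) <= M).
Proof.
  destruct sol1 as (HR1 & HC1 & Hq1 & HK1 & _). destruct sol2 as (HR2 & HC2 & Hq2 & HK2 & _).
  destruct (C1b_triangle_bounded T R1 HR1) as (MR1 & HMR1 & BR1).
  destruct (C1b_triangle_bounded T R2 HR2) as (MR2 & HMR2 & BR2).
  destruct (C1b_triangle_bounded T C1 HC1) as (MC1 & HMC1 & BC1).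
  destruct (C1b_triangle_bounded T C2 HC2) as (MC2 & HMC2 & BC2).
  destruct (C1b_interval_bounded T q1 Hq1) as (Mq1 & HMq1 & Bq1).
  destruct (C1b_interval_bounded T q2 Hq2) as (Mq2 & HMq2 & Bq2).
  destruct (C1b_interval_bounded T K1 HK1) as (MK1 & HMK1 & BK1).
  destruct (C1b_interval_bounded T K2 HK2) as (MK2 & HMK2 & BK2).
  exists (MR1 + MR2 + MC1 + MC2 + Mq1 + Mq2 + MK1 + MK2). split; [lra|split].
  - intros s t Hst. specialize (BR1 s t Hst). specialize (BR2 s t Hst).
    specialize (BC1 s t Hst). specialize (BC2 s t Hst). lra.
  - intros s Hs. specialize (Bq1 s Hs). specialize (Bq2 s Hs).
    specialize (BK1 s Hs). specialize (BK2 s Hs). lra.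
Qed.

Section RhsEstimate.

Variables (M Lf L1 L2 Lp Lv : R).
Hypotheses (HM : 0 <= M) (HLf : 0 <= Lf) (HL1 : 0 <= L1) (HL2 : 0 <= L2) (HLp : 0 <= Lp)
  (HLv : 0 <= Lv).
Hypothesis bound_R_C : forall s t, DeltaT T (s, t) ->
  Rabs (R1 s t) <= M /\ Rabs (R2 s t) <= M /\ Rabs (C1 s t) <= M /\ Rabs (C2 s t) <= M.
Hypothesis bound_q_K : forall s, I0T T s ->
  Rabs (q1 s) <= M /\ Rabs (q2 s) <= M /\ Rabs (K1 s) <= M /\ Rabs (K2 s) <= M.
Hypothesis lip_fp : lipschitz_on (fun y => 0 <= y <= M) fp Lf.
Hypothesis lip_nu1 : lipschitz_on (fun y => Rabs y <= M) (nu1 m b) L1.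
Hypothesis lip_nu2 : lipschitz_on (fun y => Rabs y <= M) (nu2 m b) L2.
Hypothesis lip_psi : lipschitz_on (fun y => Rabs y <= M) (psi m b) Lp.
Hypothesis lip_vstar1 : lipschitz_on (fun y => Rabs y <= M) (vstar1 m b qs E G) Lv.

Ltac close_pair_tac bR bC bCs bq bK :=
  repeat match goal with
  | |- close_pair _ ?a ?a _ _ => apply close_pair_refl
  | |- close_pair _ (_ + _) (_ + _) _ _ => eapply close_pair_plus
  | |- close_pair _ (_ - _) (_ - _) _ _ => eapply close_pair_minus
  | |- close_pair _ (- _) (- _) _ _ => eapply close_pair_opp
  | |- close_pair _ (_ / _) (_ / _) _ _ => eapply close_pair_div; [assumption|]
  | |- close_pair _ (_ * _) (_ * _) _ _ => eapply close_pair_mult; [assumption| |]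
  | |- close_pair _ (RInt _ _ _) (RInt _ _ _) _ _ =>
      eapply (close_pair_RInt _ T); [assumption | | | | intros ?u ?Hu; cbv beta]
  | |- close_pair _ (fp _) (fp _) _ _ =>
      eapply close_pair_lipschitz_nonneg; [eassumption | assumption .. | | | ]
  | |- close_pair _ (?h _) (?h _) _ _ =>
      eapply close_pair_lipschitz; [eassumption | assumption .. | ]
  | |- close_pair _ (R1 _ _) (R2 _ _) _ _ => eapply bR
  | |- close_pair _ (C1 _ _) (C2 _ _) _ _ => eapply bC
  | |- close_pair _ (Csym C1 _ _) (Csym C2 _ _) _ _ => eapply bCs
  | |- close_pair _ (q1 _) (q2 _) _ _ => eapply bq
  | |- close_pair _ (K1 _) (K2 _) _ _ => eapply bK
  end.

Ltac close_side :=
  first [ assumption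
        | match goal with Hnn : forall s, I0T _ s -> 0 <= ?f s |- 0 <= ?f _ => apply Hnn end;
          unfold DeltaT, I0T in *; simpl in *; lra
        | unfold DeltaT, I0T in *; simpl in *; lra ].

Lemma rhs_close : exists cR cC cq cK, forall X a, 0 <= X -> dist_le X a ->
  rhs_dist_le cR cC cq cK X a.
Proof.
  assert (K1_nonneg : forall s, I0T T s -> 0 <= K1 s) by apply sol1.
  assert (K2_nonneg : forall s, I0T T s -> 0 <= K2 s) by apply sol2.
  do 4 eexists. intros X a HX [dist_R_C dist_q_K].
  assert (bR : forall s t, DeltaT T (s, t) -> s <= a -> close_pair X (R1 s t) (R2 s t) 1 M).
  { intros s t H H'. destruct (bound_R_C s t H) as (? & ? & _). destruct (dist_R_C s t H H').
    split; [lra | split; assumption]. }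
  assert (bC : forall s t, DeltaT T (s, t) -> s <= a -> close_pair X (C1 s t) (C2 s t) 1 M).
  { intros s t H H'. destruct (bound_R_C s t H) as (_ & _ & ? & ?). destruct (dist_R_C s t H H').
    split; [lra | split; assumption]. }
  assert (bq : forall s, I0T T s -> s <= a -> close_pair X (q1 s) (q2 s) 1 M).
  { intros s H H'. destruct (bound_q_K s H) as (? & ? & _). destruct (dist_q_K s H H').
    split; [lra | split; assumption]. }
  assert (bK : forall s, I0T T s -> s <= a -> close_pair X (K1 s) (K2 s) 1 M).
  { intros s H H'. destruct (bound_q_K s H) as (_ & _ & ? & ?). destruct (dist_q_K s H H').
    split; [lra | split; assumption]. }
  assert (bCs : forall s u, 0 <= s <= T -> 0 <= u <= T -> s <= a -> u <= a ->
            close_pair X (Csym C1 s u) (Csym C2 s u) 1 M).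
  { intros s u Hs Hu Hsa Hua. unfold Csym. destruct Rle_dec; apply bC; unfold DeltaT; simpl; lra. }
  split; [|split; [|split]].
  - intros s t Hst Hsa. pose proof Hst as [Hts HsT]; simpl in Hts, HsT.
    destruct (is_solution_ex_RInt s t sol1 Hts HsT) as (I1 & _).
    destruct (is_solution_ex_RInt s t sol2 Hts HsT) as (I2 & _).
    refine (proj1 (_ : close_pair X _ _ _ _)). unfold rhs_R.
    close_pair_tac bR bC bCs bq bK; close_side.
  - intros s t Hst Hsa. pose proof Hst as [Hts HsT]; simpl in Hts, HsT.
    destruct (is_solution_ex_RInt s t sol1 Hts HsT) as (_ & I1 & I1' & _).
    destruct (is_solution_ex_RInt s t sol2 Hts HsT) as (_ & I2 & I2' & _).
    refine (proj1 (_ : close_pair X _ _ _ _)). unfold rhs_C.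
    close_pair_tac bR bC bCs bq bK; close_side.
  - intros s Hs Hsa. assert (Hss : 0 <= s <= s) by (unfold I0T in Hs; lra).
    destruct (is_solution_ex_RInt s s sol1 Hss (proj2 Hs)) as (_ & _ & _ & I1 & _).
    destruct (is_solution_ex_RInt s s sol2 Hss (proj2 Hs)) as (_ & _ & _ & I2 & _).
    refine (proj1 (_ : close_pair X _ _ _ _)). unfold rhs_q.
    close_pair_tac bR bC bCs bq bK; close_side.
  - intros s Hs Hsa. assert (Hss : 0 <= s <= s) by (unfold I0T in Hs; lra).
    destruct (is_solution_ex_RInt s s sol1 Hss (proj2 Hs)) as (_ & _ & _ & _ & I1).
    destruct (is_solution_ex_RInt s s sol2 Hss (proj2 Hs)) as (_ & _ & _ & _ & I2).
    refine (proj1 (_ : close_pair X _ _ _ _)). unfold rhs_K.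
    close_pair_tac bR bC bCs bq bK; close_side.
Qed.

End RhsEstimate.

Hypothesis fp_loc_lipschitz : forall x, 0 <= x -> exists delta L, 0 < delta /\
  forall y z, 0 <= y -> 0 <= z -> Rabs (y - x) < delta -> Rabs (z - x) < delta ->
    Rabs (fp y - fp z) <= L * Rabs (y - z).

Lemma rhs_lipschitz : exists c, 0 <= c /\ forall X a, 0 <= X -> dist_le X a ->
  rhs_dist_le c c c c X a.
Proof.
  destruct solutions_bounded as (M & HM & BRC & Bqk).
  destruct (lipschitz_on_segment_of_loc_lipschitz fp fp_loc_lipschitz M HM) as (Lf & HLf & Hf).
  destruct (lipschitz_on_bounded_nu1 m b M HM) as (L1 & HL1 & Hl1).
  destruct (lipschitz_on_bounded_nu2 m b M HM) as (L2 & HL2 & Hl2).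
  destruct (lipschitz_on_bounded_psi m b M HM) as (Lp & HLp & Hlp).
  destruct (lipschitz_on_bounded_vstar1 m b qs E G M HM) as (Lv & HLv & Hlv).
  destruct (rhs_close M Lf L1 L2 Lp Lv) as (cR & cC & cq & cK & Hc); try assumption.
  pose proof (RRle_abs cR). pose proof (RRle_abs cC). pose proof (RRle_abs cq).
  pose proof (RRle_abs cK). pose proof (Rabs_pos cR). pose proof (Rabs_pos cC).
  pose proof (Rabs_pos cq). pose proof (Rabs_pos cK).
  exists (Rabs cR + Rabs cC + Rabs cq + Rabs cK). split; [lra|]. intros X a HX Hd.
  apply (rhs_dist_le_weaken cR cC cq cK); [exact HX | lra .. | exact (Hc X a HX Hd)].
Qed.

Lemma dist_le_weaken X Y a a' : X <= Y -> a' <= a -> dist_le X a -> dist_le Y a'.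
Proof.
  intros HXY Ha [HRC HqK]. split.
  - intros s t Hst Hs. destruct (HRC s t Hst) as [HR HC]; [lra | split; lra].
  - intros s Hs Hsa. destruct (HqK s Hs) as [Hq HK]; [lra | split; lra].
Qed.

Section Contraction.

Variable c : R.
Hypothesis c_nonneg : 0 <= c.
Hypothesis rhs_bound : forall X a, 0 <= X -> dist_le X a -> rhs_dist_le c c c c X a.

Lemma q_K_diff_le a bnd X s : 0 <= a -> dist_le 0 a -> 0 <= X -> dist_le X bnd ->
  I0T T s -> a <= s <= bnd ->
  Rabs (q1 s - q2 s) <= c * X * (s - a) /\ Rabs (K1 s - K2 s) <= c * X * (s - a).
Proof.
  intros Ha [_ Agree] HX Hd Hs Has.
  destruct (rhs_bound X bnd HX Hd) as (_ & _ & Bq & BK).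
  destruct (is_solution_derivatives sol1) as (_ & _ & Dq1 & DK1).
  destruct (is_solution_derivatives sol2) as (_ & _ & Dq2 & DK2).
  assert (Ia : I0T T a) by (unfold I0T in *; lra).
  destruct (Agree a Ia (Rle_refl a)) as [Eqa EKa].
  unfold I0T in *. split.
  - apply (Rabs_diff_le_on_I0T T q1 q2 (rhs_q m b qs E G fp R1 C1 q1 K1)
             (rhs_q m b qs E G fp R2 C2 q2 K2) a s (c * X));
      [lra | lra | | exact Dq1 | exact Dq2 |].
    + apply eq_of_Rabs_minus_le_0, Eqa.
    + intros x Hx. apply Bq; unfold I0T; lra.
  - apply (Rabs_diff_le_on_I0T T K1 K2 (rhs_K m b qs E G fp R1 C1 q1 K1)
             (rhs_K m b qs E G fp R2 C2 q2 K2) a s (c * X));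
      [lra | lra | | exact DK1 | exact DK2 |].
    + apply eq_of_Rabs_minus_le_0, EKa.
    + intros x Hx. apply BK; unfold I0T; lra.
Qed.

Lemma R_C_diff_le a bnd X s t : 0 <= a -> dist_le 0 a -> 0 <= X -> dist_le X bnd ->
  DeltaT T (s, t) -> a <= s <= bnd ->
  Rabs (R1 s t - R2 s t) <= c * X * (s - a) /\ Rabs (C1 s t - C2 s t) <= c * X * (s - a).
Proof.
  intros Ha Hagree HX Hd Hst Has. pose proof Hst as [Hts HsT]; simpl in Hts, HsT.
  destruct (rhs_bound X bnd HX Hd) as (BR & BC & _ & _).
  destruct (is_solution_derivatives sol1) as (DR1 & DC1 & _ & _).
  destruct (is_solution_derivatives sol2) as (DR2 & DC2 & _ & _).
  (* Integrate in [s] from [lo]: either from the agreement time [a], or, when [t > a], from the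
     diagonal, where [R = 1] and [C = K]. *)
  set (lo := Rmax a t).
  assert (Hlo : a <= lo /\ t <= lo /\ lo <= s) by (unfold lo, Rmax; destruct Rle_dec; lra).
  assert (Init : Rabs (R1 lo t - R2 lo t) <= c * X * (lo - a) /\
                 Rabs (C1 lo t - C2 lo t) <= c * X * (lo - a)).
  { unfold lo, Rmax. destruct Rle_dec as [Hat|Hta].
    - assert (It : I0T T t) by (unfold I0T; lra).
      destruct (proj1 (is_solution_boundary sol1) t It) as [-> ->].
      destruct (proj1 (is_solution_boundary sol2) t It) as [-> ->].
      rewrite Rminus_diag, Rabs_R0. split.
      + apply Rmult_le_pos; [apply Rmult_le_pos|]; lra.
      + exact (proj2 (q_K_diff_le a bnd X t Ha Hagree HX Hd It ltac:(lra))).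
    - rewrite Rminus_diag, Rmult_0_r.
      apply (proj1 Hagree); [unfold DeltaT; simpl; lra | lra]. }
  assert (Hcomb : forall d d0 B B0, Rabs (d - d0) <= B -> Rabs d0 <= B0 -> Rabs d <= B + B0).
  { intros d d0 B B0 Hd1 Hd0. pose proof (Rabs_triang (d - d0) d0).
    replace (d - d0 + d0) with d in * by ring. lra. }
  replace (c * X * (s - a)) with (c * X * (s - lo) + c * X * (lo - a)) by ring.
  split; [eapply Hcomb; [|exact (proj1 Init)] | eapply Hcomb; [|exact (proj2 Init)]].
  - apply (Rabs_diff_le_on_row T R1 R2 (rhs_R m b fp R1 C1 K1) (rhs_R m b fp R2 C2 K2));
      [lra | lra | intros x; apply DR1 | intros x; apply DR2 |
       intros x Hx; apply BR; unfold DeltaT; simpl; lra].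
  - apply (Rabs_diff_le_on_row T C1 C2 (rhs_C m b qs E G fp R1 C1 q1 K1)
             (rhs_C m b qs E G fp R2 C2 q2 K2));
      [lra | lra | intros x; apply DC1 | intros x; apply DC2 |
       intros x Hx; apply BC; unfold DeltaT; simpl; lra].
Qed.

Lemma dist_grow a bnd X : 0 <= a <= bnd -> dist_le 0 a -> 0 <= X -> dist_le X bnd ->
  dist_le (c * X * (bnd - a)) bnd.
Proof.
  intros Ha Hagree HX Hd.
  assert (HcX : 0 <= c * X) by (apply Rmult_le_pos; assumption).
  assert (Hmono : forall s, s <= bnd -> c * X * (s - a) <= c * X * (bnd - a))
    by (intros s Hs; apply Rmult_le_compat_l; lra).
  assert (H0 : 0 <= c * X * (bnd - a)) by (apply Rmult_le_pos; lra).
  split.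
  - intros s t Hst Hsb. destruct (Rle_dec s a) as [Hsa|Hsa].
    + destruct (proj1 Hagree s t Hst Hsa). split; lra.
    + destruct (R_C_diff_le a bnd X s t (proj1 Ha) Hagree HX Hd Hst ltac:(lra)).
      specialize (Hmono s Hsb). split; lra.
  - intros s Hs Hsb. destruct (Rle_dec s a) as [Hsa|Hsa].
    + destruct (proj2 Hagree s Hs Hsa). split; lra.
    + destruct (q_K_diff_le a bnd X s (proj1 Ha) Hagree HX Hd Hs ltac:(lra)).
      specialize (Hmono s Hsb). split; lra.
Qed.

End Contraction.

Lemma dist_le_0_0 : dist_le 0 0.
Proof.
  destruct (is_solution_boundary sol1) as (Hd1 & HK1 & Hq1).
  destruct (is_solution_boundary sol2) as (Hd2 & HK2 & Hq2).
  assert (Hz : forall x, Rabs (x - x) <= 0) by (intros x; rewrite Rminus_diag, Rabs_R0; lra).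
  split.
  - intros s t [Ht Hs] Hs0. simpl in Ht, Hs. replace s with 0 by lra. replace t with 0 by lra.
    assert (I0 : I0T T 0) by (unfold I0T; lra).
    destruct (Hd1 0 I0) as [-> ->]. destruct (Hd2 0 I0) as [-> ->]. rewrite HK1, HK2. auto.
  - intros s Hs Hs0. unfold I0T in Hs. replace s with 0 by lra. rewrite HK1, HK2, Hq1, Hq2. auto.
Qed.

Lemma dist_le_0_of_halvings K a : (forall n, dist_le (K * (1 / 2) ^ n) a) -> dist_le 0 a.
Proof.
  intros Hn. split.
  - intros s t Hst Hs. split; apply (Rle_0_of_le_halvings _ K); intros n; apply (Hn n); assumption.
  - intros s Hs Hsa. split; apply (Rle_0_of_le_halvings _ K); intros n; apply (Hn n); assumption.
Qed.

Lemma dist_le_0_step : exists del, 0 < del /\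
  forall a, 0 <= a -> dist_le 0 a -> dist_le 0 (a + del).
Proof.
  destruct rhs_lipschitz as (c & Hc0 & Hc).
  destruct solutions_bounded as (M & HM & BRC & Bqk).
  set (del := / (2 * c + 2)).
  assert (Hdel : 0 < del) by (apply Rinv_0_lt_compat; lra).
  assert (Hcdel : c * del <= 1 / 2).
  { unfold del. apply Rmult_le_reg_r with (2 * c + 2); [lra|].
    rewrite Rmult_assoc, Rinv_l by lra. lra. }
  exists del. split; [exact Hdel|]. intros a Ha Hagree.
  apply dist_le_0_of_halvings with (2 * M). induction n as [|n IH].
  - rewrite pow_O, Rmult_1_r. split.
    + intros s t Hst _. destruct (BRC s t Hst) as (? & ? & ? & ?).
      split; eapply Rle_trans; try apply Rabs_triang; rewrite Rabs_Ropp; lra.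
    + intros s Hs _. destruct (Bqk s Hs) as (? & ? & ? & ?).
      split; eapply Rle_trans; try apply Rabs_triang; rewrite Rabs_Ropp; lra.
  - set (X := 2 * M * (1 / 2) ^ n) in IH.
    assert (HX : 0 <= X) by (apply Rmult_le_pos; [lra | apply pow_le; lra]).
    assert (Hhalf : c * X * (a + del - a) <= 2 * M * (1 / 2) ^ S n).
    { replace (2 * M * (1 / 2) ^ S n) with (1 / 2 * X) by (unfold X; simpl; ring).
      replace (c * X * (a + del - a)) with (c * del * X) by ring.
      apply Rmult_le_compat_r; assumption. }
    exact (dist_le_weaken _ _ _ _ Hhalf (Rle_refl _)
             (dist_grow c Hc0 Hc a (a + del) X ltac:(lra) Hagree HX IH)).
Qed.

Lemma solutions_agree :
  (forall s t, DeltaT T (s, t) -> R1 s t = R2 s t /\ C1 s t = C2 s t) /\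
  (forall s, I0T T s -> q1 s = q2 s /\ K1 s = K2 s).
Proof.
  destruct dist_le_0_step as (del & Hdel & Hstep).
  assert (Hn : forall n, dist_le 0 (INR n * del)).
  { induction n as [|n IH]; [rewrite Rmult_0_l; exact dist_le_0_0|].
    rewrite S_INR, Rmult_plus_distr_r, Rmult_1_l.
    apply Hstep; [apply Rmult_le_pos; [apply pos_INR | lra] | exact IH]. }
  destruct (INR_unbounded (T / del)) as [n Hn'].
  assert (HT : T <= INR n * del).
  { apply Rmult_lt_compat_r with (r := del) in Hn'; [|exact Hdel].
    unfold Rdiv in Hn'. rewrite Rmult_assoc, Rinv_l, Rmult_1_r in Hn' by lra. lra. }
  destruct (Hn n) as [HRC HqK]. split.
  - intros s t Hst. destruct (HRC s t Hst) as [HR HC]; [destruct Hst; simpl in *; lra|].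
    split; apply eq_of_Rabs_minus_le_0; assumption.
  - intros s Hs. destruct (HqK s Hs) as [Hq HK]; [unfold I0T in Hs; lra|].
    split; apply eq_of_Rabs_minus_le_0; assumption.
Qed.

Lemma H_agree s : I0T T s -> H1 s = H2 s.
Proof.
  intros Hs. destruct solutions_agree as [HRC HqK].
  rewrite (is_solution_H sol1 s Hs), (is_solution_H sol2 s Hs).
  unfold I0T in Hs. rewrite (proj1 (HqK s ltac:(unfold I0T; lra))).
  f_equal. apply RInt_ext. intros u Hu. rewrite Rmin_left, Rmax_right in Hu by lra.
  assert (Hsu : DeltaT T (s, u)) by (unfold DeltaT; simpl; lra).
  destruct (HRC s u Hsu) as [ER EC].
  assert (ECs : Csym C1 s u = Csym C2 s u) by (unfold Csym; destruct Rle_dec; [exact EC | lra]).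
  rewrite ER, ECs, (proj1 (HqK u ltac:(unfold I0T; lra))). reflexivity.
Qed.

End TwoSolutions.

Theorem proposition3p4
  (m : nat) (b : nat -> R) (qs qo E G : R) (f fp : R -> R) (T : R) :
  (2 <= m)%nat -> b m <> 0 -> 0 < qs ->
  (is_pure m b -> G = INR m * E / qs ^ 2) ->
  f_assumptions m f fp ->
  forall (R1 C1 : R -> R -> R) (q1 K1 H1 : R -> R)
         (R2 C2 : R -> R -> R) (q2 K2 H2 : R -> R),
  is_solution m b qs qo E G fp T R1 C1 q1 K1 H1 ->
  is_solution m b qs qo E G fp T R2 C2 q2 K2 H2 ->
  (forall s t, DeltaT T (s, t) -> R1 s t = R2 s t /\ C1 s t = C2 s t) /\
  (forall s, I0T T s -> q1 s = q2 s /\ K1 s = K2 s /\ H1 s = H2 s).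
Proof.
  intros _ _ _ _ (_ & fp_loc_lipschitz & _) R1 C1 q1 K1 H1 R2 C2 q2 K2 H2 sol1 sol2.
  destruct (solutions_agree m b qs qo E G fp T R1 C1 q1 K1 H1 R2 C2 q2 K2 H2 sol1 sol2
              fp_loc_lipschitz) as [HRC HqK].
  split; [exact HRC|]. intros s Hs. destruct (HqK s Hs) as [Hq HK].
  split; [exact Hq | split; [exact HK|]].
  exact (H_agree m b qs qo E G fp T R1 C1 q1 K1 H1 R2 C2 q2 K2 H2 sol1 sol2 fp_loc_lipschitz s Hs).
Qed.
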